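(* Let $Q_k^A,Q_k^B$ be the SDQ iterates and $w_k^A,w_k^B$ the associated noise vectors (see context). Define the upper comparison system \[ Q_{k+1}^{A_U}-Q^*=(I+\alpha\gamma DP\Pi_{Q_k^B}-\alpha D)(Q_k^{A_U}-Q^* )+\alpha w_k^A,\qquad Q_{k+1}^{B_U}-Q^*=(I+\alpha\gamma DP\Pi_{Q_k^A}-\alpha D)(Q_k^{B_U}-Q^* )+\alpha w_k^B, \] with arbitrary initial vectors $Q_0^{A_U},Q_0^{B_U}\in\mathbb{R}^{|\mathcal{S}||\mathcal{A}|}$. Suppose $Q_0^{A_U}-Q^*\ge Q_0^A-Q^*$ and $Q_0^{B_U}-Q^*\ge Q_0^B-Q^*$ element-wise. Then for all $k\ge 0$, $Q_k^{A_U}-Q^*\ge Q_k^A-Q^*$ and $Q_k^{B_U}-Q^*\ge Q_k^B-Q^*$ element-wise.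
   Context: Finite MDP with states $\mathcal{S}=\{1,\dots,|\mathcal{S}|\}$, actions $\mathcal{A}=\{1,\dots,|\mathcal{A}|\}$, transitions $P(s'|s,a)$, bounded deterministic reward $r(s,a,s')$, discount $\gamma\in(0,1)$, optimal action-value function $Q^*$. Sampling distribution $d(s,a)>0$ on $\mathcal{S}\times\mathcal{A}$; at iteration $k$, $(s_k,a_k)\sim d$ i.i.d., $s_k'\sim P(\cdot|s_k,a_k)$, $r_{k+1}=r(s_k,a_k,s_k')$. Constant step-size $\alpha\in(0,1)$. SDQ: only entry $(s_k,a_k)$ is updated, $Q_{k+1}^A(s_k,a_k)=Q_k^A(s_k,a_k)+\alpha\{r_{k+1}+\gamma Q_k^A(s_k',\arg\max_aQ_k^B(s_k',a))-Q_k^A(s_k,a_k)\}$ and symmetrically for $B$ with roles of $A,B$ swapped. Vector notation: $Q\in\mathbb{R}^{|\mathcal{S}||\mathcal{A}|}$ stacks $Q(\cdot,1),\dots,Q(\cdot,|\mathcal{A}|)$, so $Q(s,a)=(e_a\otimes e_s)^TQ$. $D$ is the diagonal matrix with entry $d(s,a)$ at position $(s,a)$. $P\in\mathbb{R}^{|\mathcal{S}||\mathcal{A}|\times|\mathcal{S}|}$ has row $(s,a)$ equal to $P(\cdot|s,a)$. $R\in\mathbb{R}^{|\mathcal{S}||\mathcal{A}|}$, $R(s,a)=\mathbb{E}[r(s,a,s')|s,a]$. For $Q$, $\pi_Q(s)=\arg\max_aQ(s,a)$ (fixed tie-breaking) and $\Pi_Q\in\mathbb{R}^{|\mathcal{S}|\times|\mathcal{S}||\mathcal{A}|}$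 has $s$-th row $e_{\pi_Q(s)}^T\otimes e_s^T$, so $(\Pi_QQ')(s)=Q'(s,\pi_Q(s))$. Noise: $w_k^A=(e_{a_k}\otimes e_{s_k})r_{k+1}+\gamma(e_{a_k}\otimes e_{s_k})e_{s_k'}^T\Pi_{Q_k^B}Q_k^A-(e_{a_k}\otimes e_{s_k})(e_{a_k}\otimes e_{s_k})^TQ_k^A-(DR+\gamma DP\Pi_{Q_k^B}Q_k^A-DQ_k^A)$, and $w_k^B$ is the same with $A$ and $B$ swapped. Element-wise inequalities between vectors are denoted $\ge$. *)

From HB Require Import structures.
From mathcomp Require Import all_boot all_order all_algebra.
From mathcomp Require Import reals.
Set Implicit Arguments. Unset Strict Implicit. Unset Printing Implicit Defensive.
Import Order.TTheory GRing.Theory Num.Theory.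
Local Open Scope ring_scope.

Section SDQ.
Variables (R : realType) (nS nA : nat).

(* Vectors in R^{|S||A|} stack Q(.,1),...,Q(.,|A|): entry (s,a) sits at
   index  a*|S| + s  =  mxvec_index a s, i.e. the row of e_a (x) e_s. *)
Definition vecT := 'cV[R]_(nA * nS).
Definition idx (s : 'I_nS) (a : 'I_nA) : 'I_(nA * nS) := mxvec_index a s.
Definition ent (Q : vecT) (s : 'I_nS) (a : 'I_nA) : R := Q (idx s a) 0.

Definition esa (s : 'I_nS) (a : 'I_nA) : vecT := delta_mx (idx s a) 0.
Definition es (s : 'I_nS) : 'cV[R]_nS := delta_mx s 0.

Definition is_greedy (pi : vecT -> 'I_nS -> 'I_nA) : Prop :=
  forall Q s a, ent Q s a <= ent Q s (pi Q s).

Definition PiM (pi : vecT -> 'I_nS -> 'I_nA) (Q : vecT) : 'M[R]_(nS, nA * nS) :=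
  \matrix_(s, j) (j == idx s (pi Q s))%:R.

Definition Dmx (d : vecT) : 'M[R]_(nA * nS) := diag_mx d^T.

Definition Rvec (P : 'M[R]_(nA * nS, nS)) (r : 'I_nS -> 'I_nA -> 'I_nS -> R) : vecT :=
  \col_(i < nA * nS) \sum_(s' < nS)
     P i s' * r (snd (pair_of_mxvec_index (mxvec_indexP i)))
                (fst (pair_of_mxvec_index (mxvec_indexP i))) s'.

Definition stochastic (P : 'M[R]_(nA * nS, nS)) : Prop :=
  (forall i s', 0 <= P i s') /\ (forall i, \sum_(s' < nS) P i s' = 1).

Definition pos_distribution (d : vecT) : Prop :=
  (forall i, 0 < d i 0) /\ \sum_(i < nA * nS) d i 0 = 1.

(* Q* : optimal action-value function, characterized by the Bellman
   optimality equation  Q* = R + gamma P Pi_{Q*} Q*  *)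
Definition bellman_opt pi P (Rv : vecT) (gamma : R) (Qs : vecT) : Prop :=
  Qs = Rv + gamma *: (P *m (PiM pi Qs *m Qs)).

Definition sdq_step pi (alpha gamma : R) (s : 'I_nS) (a : 'I_nA) (s' : 'I_nS)
  (rew : R) (QA QB : vecT) : vecT :=
  QA + (alpha * (rew + gamma * ent QA s' (pi QB s') - ent QA s a)) *: esa s a.

Definition noise pi (d : vecT) P Rv (gamma : R) (s : 'I_nS) (a : 'I_nA)
  (s' : 'I_nS) (rew : R) (QA QB : vecT) : vecT :=
  rew *: esa s a
  + gamma *: (esa s a *m (es s')^T *m PiM pi QB *m QA)
  - esa s a *m (esa s a)^T *m QA
  - (Dmx d *m Rv + gamma *: (Dmx d *m P *m PiM pi QB *m QA) - Dmx d *m QA).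

Definition lev (u v : vecT) : Prop := forall i, u i 0 <= v i 0.

End SDQ.

From HB Require Import structures.
From mathcomp Require Import all_boot all_order all_algebra.
From mathcomp Require Import reals.
From mathcomp Require Import ring.
Set Implicit Arguments. Unset Strict Implicit. Unset Printing Implicit Defensive.
Import Order.TTheory GRing.Theory Num.Theory.
Local Open Scope ring_scope.

(* Subtracting the SDQ recursion, rewritten with the Bellman equation
   R = Q^* - gamma P Pi_{Q^*} Q^*, from the comparison recursion cancels the noise:
   the gap G = Q^{A_U} - Q^A evolves as
     G' = (I + alpha gamma D P Pi_{Q^B} - alpha D) G
          + alpha gamma D P (Pi_{Q^*} - Pi_{Q^B}) Q^*.
   The matrix is entrywise nonnegative since alpha d(s,a) <= 1, and the forcing
   term is nonnegative since Pi_{Q^*} Q^* picks the maximum of Q^* in every state,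
   so nonnegativity of the gap propagates by induction (and likewise for B). *)

Local Notation nnegmx := (mxOver Num.nneg).

Lemma nnegmxD (R : numDomainType) m n (A B : 'M[R]_(m, n)) :
  A \is a nnegmx -> B \is a nnegmx -> A + B \is a nnegmx.
Proof.
move=> /mxOverP A_ge0 /mxOverP B_ge0; apply/mxOverP => i j.
by rewrite mxE rpredD.
Qed.

Section SDQComparison.
Variables (R : realType) (nS nA : nat) (pi : vecT R nS nA -> 'I_nS -> 'I_nA).
Local Notation vecT := (vecT R nS nA).

Definition sdq_mx (alpha gamma : R) (d : vecT) (P : 'M[R]_(nA * nS, nS))
    (Q : vecT) : 'M[R]_(nA * nS) :=
  1%:M + (alpha * gamma) *: (Dmx d *m P *m PiM pi Q) - alpha *: Dmx d.

Lemma PiM_mulE (Q : vecT) m (V : 'M[R]_(nA * nS, m)) s j :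
  (PiM pi Q *m V) s j = V (idx s (pi Q s)) j.
Proof.
rewrite mxE (bigD1 (idx s (pi Q s))) //= mxE eqxx mul1r big1 ?addr0 // => i.
by rewrite mxE => /negbTE ->; rewrite mul0r.
Qed.

Lemma sdq_sample_increment (gamma : R) s a s' rew (QA QB : vecT) :
  rew *: esa R s a + gamma *: (esa R s a *m (es R s')^T *m PiM pi QB *m QA)
    - esa R s a *m (esa R s a)^T *m QA
  = (rew + gamma * ent QA s' (pi QB s') - ent QA s a) *: esa R s a.
Proof.
have delta_mulE n (i : 'I_n) (V : 'cV[R]_n) :
    (delta_mx i 0)^T *m V = (V i 0)%:M.
  by rewrite trmx_delta -rowE; apply/rowP => j; rewrite ord1 !mxE eqxx mulr1n.
rewrite -!mulmxA !delta_mulE PiM_mulE.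
by rewrite !mul_mx_scalar scalerA -scalerDl -scalerBl.
Qed.

Lemma sdq_step_noiseE (alpha gamma : R) d P Rv s a s' rew (QA QB : vecT) :
  sdq_step pi alpha gamma s a s' rew QA QB =
  QA + alpha *: (Dmx d *m Rv + gamma *: (Dmx d *m P *m PiM pi QB *m QA)
                 - Dmx d *m QA + noise pi d P Rv gamma s a s' rew QA QB).
Proof.
by rewrite /sdq_step /noise sdq_sample_increment -scalerA subrKC.
Qed.

Lemma sdq_step_error (alpha gamma : R) d P Rv (Qs : vecT) s a s' rew
    (QA QB : vecT) :
  bellman_opt pi P Rv gamma Qs ->
  sdq_step pi alpha gamma s a s' rew QA QB - Qs =
  sdq_mx alpha gamma d P QB *m (QA - Qs)
  + alpha *: noise pi d P Rv gamma s a s' rew QA QB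
  + (alpha * gamma) *: (Dmx d *m P *m (PiM pi QB *m Qs - PiM pi Qs *m Qs)).
Proof.
move=> opt; rewrite (sdq_step_noiseE _ _ d P Rv) /sdq_mx.
move: (noise _ _ _ _ _ _ _ _ _ _ _) => w.
have -> : Rv = Qs - gamma *: (P *m (PiM pi Qs *m Qs)) by rewrite {1}opt addrK.
rewrite !(mulmxDl, mulmxBl, mulmxDr, mulmxBr, mul1mx, mulmxN, mulNmx).
rewrite !(scalerDr, scalerBr, scalerN) -!(scalemxAl, scalemxAr) !mulmxA.
by apply/matrixP => i j; rewrite !mxE; ring.
Qed.

Lemma lev_subr_nnegmx (u v w : vecT) : lev (u - w) (v - w) <-> v - u \is a nnegmx.
Proof.
split=> [le_uv | /mxOverP uv_ge0 i].
  apply/mxOverP => i j; rewrite ord1 !mxE nnegrE subr_ge0.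
  by have := le_uv i; rewrite !mxE lerD2r.
by have := uv_ge0 i 0; rewrite !mxE nnegrE subr_ge0 lerD2r.
Qed.

Lemma greedy_gap_nnegmx (Q Q' : vecT) :
  is_greedy pi -> PiM pi Q *m Q - PiM pi Q' *m Q \is a nnegmx.
Proof.
move=> greedy; apply/mxOverP => s j.
by rewrite mxE [X in _ + X]mxE !PiM_mulE nnegrE subr_ge0 (ord1 j); exact: greedy.
Qed.

Lemma PiM_nnegmx (Q : vecT) : PiM pi Q \is a nnegmx.
Proof. by apply/mxOverP => s j; rewrite mxE nnegrE ler0n. Qed.

Lemma pos_distribution_le1 (d : vecT) i : pos_distribution d -> d i 0 <= 1.
Proof.
move=> [d_gt0 <-]; rewrite (bigD1 i) //= lerDl sumr_ge0 // => j _.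
exact: ltW.
Qed.

Lemma stochastic_nnegmx (P : 'M[R]_(nA * nS, nS)) :
  stochastic P -> P \is a nnegmx.
Proof. by move=> [P_ge0 _]; apply/mxOverP => i j; rewrite nnegrE. Qed.

Lemma Dmx_nnegmx (d : vecT) : pos_distribution d -> Dmx d \is a nnegmx.
Proof.
move=> [d_gt0 _]; apply/mxOverP => i j; rewrite !mxE nnegrE.
by case: eqP => _; rewrite ?mulr0n ?mulr1n // ltW.
Qed.

Lemma sdq_mx_nnegmx alpha gamma d P (Q : vecT) :
  stochastic P -> 0 <= gamma -> pos_distribution d -> 0 <= alpha <= 1 ->
  sdq_mx alpha gamma d P Q \is a nnegmx.
Proof.
move=> stochP gamma_ge0 dd /andP[alpha_ge0 alpha_le1].
have -> : sdq_mx alpha gamma d P Q =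
    (1%:M - alpha *: Dmx d) + (alpha * gamma) *: (Dmx d *m P *m PiM pi Q).
  by rewrite /sdq_mx addrAC.
apply: nnegmxD.
  apply/mxOverP => i j; rewrite !mxE nnegrE.
  case: eqP => [->|_]; last by rewrite !mulr0n mulr0 subr0.
  rewrite !mulr1n subr_ge0 mulr_ile1 //; last exact: pos_distribution_le1.
  by case: dd => /(_ j) /ltW.
by rewrite mxOverZ ?nnegrE ?mulr_ge0 // !mxOverM ?PiM_nnegmx ?Dmx_nnegmx
  ?stochastic_nnegmx.
Qed.

Lemma sdq_comparison_step (alpha gamma : R) d P Rv (Qs : vecT) s a s' rew
    (QA QB QAU QAU' : vecT) :
  stochastic P -> 0 <= gamma -> pos_distribution d -> 0 <= alpha <= 1 ->
  is_greedy pi -> bellman_opt pi P Rv gamma Qs ->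
  QAU' - Qs = sdq_mx alpha gamma d P QB *m (QAU - Qs)
              + alpha *: noise pi d P Rv gamma s a s' rew QA QB ->
  lev (QA - Qs) (QAU - Qs) ->
  lev (sdq_step pi alpha gamma s a s' rew QA QB - Qs) (QAU' - Qs).
Proof.
move=> stochP gamma_ge0 dd alpha01 greedy opt QAU'E /lev_subr_nnegmx le_A.
apply/lev_subr_nnegmx.
have gap : (QAU' - Qs) - (sdq_step pi alpha gamma s a s' rew QA QB - Qs) =
    sdq_mx alpha gamma d P QB *m (QAU - QA)
    + (alpha * gamma) *: (Dmx d *m P *m (PiM pi Qs *m Qs - PiM pi QB *m Qs)).
  rewrite QAU'E (sdq_step_error alpha d s a s' rew QA QB opt).
  move: (sdq_mx _ _ _ _ _) (noise _ _ _ _ _ _ _ _ _ _ _) => M w.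
  rewrite !mulmxBr !scalerBr.
  by apply/matrixP => i j; rewrite !mxE; ring.
rewrite opprB addrA subrK in gap.
have /andP[alpha_ge0 _] := alpha01.
by rewrite gap nnegmxD ?mxOverZ ?nnegrE ?mulr_ge0 ?mxOverM ?greedy_gap_nnegmx
  ?sdq_mx_nnegmx ?Dmx_nnegmx ?stochastic_nnegmx.
Qed.

End SDQComparison.

Theorem proposition1 (R : realType) (nS nA : nat)
  (P : 'M[R]_(nA * nS, nS)) (r : 'I_nS -> 'I_nA -> 'I_nS -> R)
  (gamma alpha : R) (d : vecT R nS nA)
  (pi : vecT R nS nA -> 'I_nS -> 'I_nA) (Qs : vecT R nS nA)
  (s : nat -> 'I_nS) (a : nat -> 'I_nA) (s' : nat -> 'I_nS)
  (QA QB QAU QBU : nat -> vecT R nS nA) :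
  stochastic P ->
  0 < gamma < 1 ->
  pos_distribution d ->
  0 < alpha < 1 ->
  is_greedy pi ->
  bellman_opt pi P (Rvec P r) gamma Qs ->
  (* the samples are a realization of the sampling model *)
  (forall k, 0 < P (idx (s k) (a k)) (s' k)) ->
  (* SDQ iterates (arbitrary initial values QA 0, QB 0) *)
  (forall k, QA k.+1 = sdq_step pi alpha gamma (s k) (a k) (s' k)
                         (r (s k) (a k) (s' k)) (QA k) (QB k)) ->
  (forall k, QB k.+1 = sdq_step pi alpha gamma (s k) (a k) (s' k)
                         (r (s k) (a k) (s' k)) (QB k) (QA k)) ->
  (* upper comparison system (arbitrary initial values QAU 0, QBU 0) *)
  (forall k, QAU k.+1 - Qs =
     (1%:M + (alpha * gamma) *: (Dmx d *m P *m PiM pi (QB k)) - alpha *: Dmx d)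
       *m (QAU k - Qs)
     + alpha *: noise pi d P (Rvec P r) gamma (s k) (a k) (s' k)
                  (r (s k) (a k) (s' k)) (QA k) (QB k)) ->
  (forall k, QBU k.+1 - Qs =
     (1%:M + (alpha * gamma) *: (Dmx d *m P *m PiM pi (QA k)) - alpha *: Dmx d)
       *m (QBU k - Qs)
     + alpha *: noise pi d P (Rvec P r) gamma (s k) (a k) (s' k)
                  (r (s k) (a k) (s' k)) (QB k) (QA k)) ->
  lev (QA 0%N - Qs) (QAU 0%N - Qs) ->
  lev (QB 0%N - Qs) (QBU 0%N - Qs) ->
  forall k, lev (QA k - Qs) (QAU k - Qs) /\ lev (QB k - Qs) (QBU k - Qs).
Proof.
move=> stochP /andP[gamma_ge0 _] dd /andP[alpha_ge0 alpha_lt1] greedy opt _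
  QAE QBE QAUE QBUE le0_A le0_B.
have alpha01 : 0 <= alpha <= 1 by rewrite !ltW.
have step := sdq_comparison_step stochP (ltW gamma_ge0) dd alpha01 greedy opt.
elim=> [|k [le_A le_B]]; first by split.
by rewrite QAE QBE; split; [exact: step (QAUE k) le_A | exact: step (QBUE k) le_B].
Qed.
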